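(* Let $T=T(n,a,b)$ with $a\ge 0$, $b\ge a+2$ and $2(a+b)<n-1$, let $\ell=n-a-b$ and $x=x(T)$. Let $e$ be the edge of $T$ containing both $v_{\ell-b}$ and $v_{\ell-b+1}$, and let $T_1$ and $T_2$ be the components of $T-e$ containing $v_{\ell-b}$ and $v_{\ell-b+1}$, respectively. If $b\ge\frac{\ell}{2}$, then $\sigma_T(T_1)<\sigma_T(T_2)$.
   Context: Hypergraphs have edges that are vertex subsets of size at least two; distance $d_T(u,v)$ in a hypertree is the length of a shortest loose path (an alternating sequence of distinct vertices and distinct edges $(v_0,e_1,v_1,\dots,e_p,v_p)$ with $v_{i-1},v_i\in e_i$ and non-consecutive edges disjoint). $D(T)$ is the distance matrix, $\rho(T)$ its largest eigenvalue, $x(T)$ the unit positive eigenvector for $\rho(T)$. $T-e$ has vertex set $V(T)$ and edge set $E(T)\setminus\{e\}$. For a subhypergraph $H$, $\sigma_T(H)=\sum_{v\in V(H)}x_v$. For integers $n,a,b$ with $0\le a\le b$ and $a+b\le\lfloor\frac{n-1}{2}\rfloor$, put $\ell=n-a-b$ and $I=\{1,\dots,a\}\cup\{\ell-b,\dots,\ell-1\}$; $T(n,a,b)$ is the hypertree with vertex set $\{v_1,\dots,v_\ell\}\cup\{w_i:i\in I\}$ and edges $\{v_i,w_i,v_{i+1}\}$ for $i\in I$ and $\{v_i,v_{i+1}\}$ for $i\in\{1,\dots,\ell-1\}\setminus I$. *)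

From HB Require Import structures.
From mathcomp Require Import all_boot all_order all_algebra.
From mathcomp Require Import boolp reals.
Set Implicit Arguments. Unset Strict Implicit. Unset Printing Implicit Defensive.
Import Order.TTheory GRing.Theory Num.Theory.
Local Open Scope ring_scope.

(** A loose path (u = v_0, e_1, v_1, ..., e_p, v_p = v): the vertex list is
    [u :: ws] (with [last u ws = v]), the edge list is [es] (p = size es);
    vertices distinct, edges distinct and edges of [E], v_{i-1}, v_i in e_i,
    non-consecutive edges disjoint. *)
Definition loose_path (n : nat) (E : seq {set 'I_n}) (u v : 'I_n)
    (ws : seq 'I_n) (es : seq {set 'I_n}) : Prop :=
  [/\ size ws = size es /\ last u ws = v,
      uniq (u :: ws) /\ uniq es, {subset es <= E},
      (forall i, (i < size es)%N ->
         nth u (u :: ws) i \in nth set0 es i /\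
         nth u (u :: ws) i.+1 \in nth set0 es i) &
      (forall i j, (i.+1 < j)%N -> (j < size es)%N ->
         nth set0 es i :&: nth set0 es j = set0)].

Definition has_lpath n (E : seq {set 'I_n}) (u v : 'I_n) (p : nat) : Prop :=
  exists ws es, loose_path E u v ws es /\ size es = p.

Lemma hdist_ex n (E : seq {set 'I_n}) (u v : 'I_n) :
  (exists p, has_lpath E u v p) -> exists p, `[< has_lpath E u v p >].
Proof. by case=> p hp; exists p; apply/asboolP. Qed.

(** Distance: length of a shortest loose path (0 if none exists; this case
    never occurs for the connected hypertrees considered here). *)
Definition hdist n (E : seq {set 'I_n}) (u v : 'I_n) : nat :=
  match pselect (exists p, has_lpath E u v p) with
  | left h => ex_minn (hdist_ex h)
  | right _ => 0%N
  end.

Definition distmx (R : realType) n (E : seq {set 'I_n}) : 'M[R]_n :=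
  \matrix_(i, j) (hdist E i j)%:R.

Definition component n (E : seq {set 'I_n}) (v : 'I_n) : {set 'I_n} :=
  [set u | `[< exists p, has_lpath E v u p >]].

Definition del_edge n (E : seq {set 'I_n}) (e : {set 'I_n}) : seq {set 'I_n} :=
  [seq f <- E | f != e].

Definition sigma (R : realType) n (x : 'cV[R]_n) (V : {set 'I_n}) : R :=
  \sum_(u in V) x u ord0.

(** Labelling of vertices by 'I_n:  v_i (1 <= i <= l) has label i-1;
    w_i (1 <= i <= a) has label l + i - 1;
    w_i (l-b <= i <= l-1) has label l + a + (i - (l-b)).  Here l = n - a - b. *)
Definition tl (n a b : nat) : nat := (n - a - b)%N.
Definition inI (n a b i : nat) : bool :=
  ((1 <= i <= a) || (tl n a b - b <= i <= tl n a b - 1))%N.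
Definition vlab (i : nat) : nat := i.-1.
Definition wlab (n a b i : nat) : nat :=
  if (i <= a)%N then (tl n a b + i.-1)%N else (tl n a b + a + (i - (tl n a b - b)))%N.

Definition Tedge (n a b i : nat) : {set 'I_n} :=
  [set y : 'I_n | (val y == vlab i) || (val y == vlab i.+1)
                  || (inI n a b i && (val y == wlab n a b i))].

Definition Tnab (n a b : nat) : seq {set 'I_n} :=
  [seq Tedge n a b i | i <- iota 1 (tl n a b).-1].

From HB Require Import structures.
From mathcomp Require Import all_boot all_order all_algebra.
From mathcomp Require Import boolp reals.
From mathcomp Require Import zify ring lra.
Import Order.TTheory GRing.Theory Num.Theory.
Set Implicit Arguments. Unset Strict Implicit. Unset Printing Implicit Defensive.

(* Place v_i at position 2i and w_i at position 2i+1 of a line.  Distances in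
   T(n,a,b) then depend only on positions, and subtracting the eigen-equations
   rho x = D x at the two ends of an edge expresses rho (x_u - x_v) as the
   x-weight beyond the edge on the side of v minus the x-weight beyond it on the
   side of u.  With k = l - b, the component of v_k in T - e is the part at
   positions <= 2k, that of v_(k+1) the part at positions >= 2k+2.
   Suppose the left weight is at least the right one and reflect in e.  Induction
   on d shows x(v_(k-d)) <= x(v_(k+1+d)) and that the left-minus-right weight gap
   of this pair never decreases: each v_j with j >= k carries a pendant w_j,
   which outweighs the pendant (if any) of its mirror image, and w_(k-1) is absent
   because a < k-1, so the gap becomes positive.  For d = k-1, available because
   2k <= l, the left part is v_1 alone, so x(v_1) > x(v_(2k)) >= x(v_1). *)

Section LoosePaths.
Variables (n : nat) (E : seq {set 'I_n}).

Lemma lpath_rev u v ws es :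
  loose_path E u v ws es -> loose_path E v u (rev (belast u ws)) (rev es).
Proof.
move=> [[hs hl] [hu he] hsub hnth hdis].
have hfull : v :: rev (belast u ws) = rev (u :: ws).
  by rewrite [u :: ws]lastI rev_rcons hl.
set p := size es.
have nf i : i <= p -> nth v (v :: rev (belast u ws)) i = nth u (u :: ws) (p - i).
  move=> hi; rewrite hfull nth_rev /= ?hs; last lia.
  by rewrite subSS; apply: set_nth_default; rewrite /= hs -/p; lia.
have ne i : i < p -> nth set0 (rev es) i = nth set0 es (p - i.+1).
  by move=> hi; rewrite nth_rev.
split.
- split; first by rewrite !size_rev size_belast hs.
  have := congr1 (last v) hfull; rewrite /= => ->.
  by rewrite rev_cons last_rcons.
- by rewrite hfull !rev_uniq.
- by move=> f; rewrite mem_rev; apply: hsub.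
- move=> i; rewrite size_rev -/p => hi.
  have [? ?] := hnth (p - i.+1) ltac:(lia).
  rewrite ne // !nf; try lia.
  by rewrite (_ : p - i = (p - i.+1).+1); last lia.
- move=> i j hij; rewrite size_rev -/p => hj.
  by rewrite !ne 1?setIC ?hdis //; lia.
Qed.

Lemma has_lpath_sym u v p : has_lpath E u v p -> has_lpath E v u p.
Proof.
case=> ws [es [/lpath_rev hp <-]].
by exists (rev (belast u ws)), (rev es); rewrite size_rev.
Qed.

Lemma has_lpath_seq (f : nat -> 'I_n) (h : nat -> {set 'I_n}) p :
  {in gtn p.+1 &, injective f} -> {in gtn p &, injective h} ->
  (forall i, i < p -> [/\ h i \in E, f i \in h i & f i.+1 \in h i]) ->
  (forall i j, i.+1 < j < p -> h i :&: h j = set0) ->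
  has_lpath E (f 0) (f p) p.
Proof.
move=> f_inj h_inj walk disj.
exists [seq f i | i <- iota 1 p], [seq h i | i <- iota 0 p].
split; last by rewrite size_map size_iota.
have nth_f i : i <= p -> nth (f 0) [seq f i | i <- iota 0 p.+1] i = f i.
  by move=> ?; rewrite (nth_map 0) ?size_iota ?nth_iota.
have nth_h i : i < p -> nth set0 [seq h i | i <- iota 0 p] i = h i.
  by move=> ?; rewrite (nth_map 0) ?size_iota ?nth_iota.
split; rewrite ?size_map ?size_iota //.
- split=> //; rewrite last_map; congr f.
  case: p {f_inj h_inj walk disj nth_f nth_h} => // p.
  by rewrite -nth_last size_iota nth_iota.
- change (f 0 :: _) with [seq f i | i <- iota 0 p.+1].
  split; rewrite map_inj_in_uniq ?iota_uniq // => i j; rewrite !mem_iota => ? ?.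
  - by apply: f_inj; rewrite unfold_in /=; lia.
  - by apply: h_inj; rewrite unfold_in /=; lia.
- by move=> e /mapP[i]; rewrite mem_iota => ? ->; have [] := walk i ltac:(lia).
- move=> i ip; change (f 0 :: _) with [seq f i | i <- iota 0 p.+1].
  have [_ ? ?] := walk i ip.
  by rewrite nth_h // !nth_f //; lia.
- by move=> i j ij jp; rewrite !nth_h ?disj //; lia.
Qed.

Lemma hdist_eq u v d : has_lpath E u v d ->
  (forall p, has_lpath E u v p -> d <= p) -> hdist E u v = d.
Proof.
move=> hd dmin; rewrite /hdist; case: pselect => [h|[]]; last by exists d.
case: ex_minnP => m /asboolP hm mmin.
by apply/eqP; rewrite eqn_leq dmin // mmin //; apply/asboolP.
Qed.

Lemma nth_lpath_size u v ws es :
  loose_path E u v ws es -> nth u (u :: ws) (size es) = v.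
Proof. by case=> -[<- <-] _ _ _ _; rewrite (nth_last u (u :: ws)). Qed.

Lemma lpath_closed (P : pred 'I_n) u v ws es :
  (forall f y z, f \in E -> y \in f -> z \in f -> P y -> P z) ->
  loose_path E u v ws es -> P u -> P v.
Proof.
move=> P_closed hp Pu; rewrite -(nth_lpath_size hp).
case: hp => _ _ hsub hnth _.
suff nthP i : i <= size es -> P (nth u (u :: ws) i) by apply: nthP.
elim: i => // i IH ilt.
have [yin zin] := hnth i ilt.
exact: P_closed (hsub _ (mem_nth set0 ilt)) yin zin (IH (ltnW ilt)).
Qed.

Lemma lpath_size_ge (d : 'I_n -> 'I_n -> nat) u v ws es :
  (forall y, d y y = 0) -> (forall x y z, d x z <= d x y + d y z) ->
  (forall f y z, f \in E -> y \in f -> z \in f -> d y z <= 1) ->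
  loose_path E u v ws es -> d u v <= size es.
Proof.
move=> d0 d_tri d_edge hp; rewrite -{1}(nth_lpath_size hp).
case: hp => _ _ hsub hnth _.
suff nthP i : i <= size es -> d u (nth u (u :: ws) i) <= i by apply: nthP.
elim: i => [|i IH ilt]; first by rewrite d0.
have [yin zin] := hnth i ilt.
apply: leq_trans (d_tri _ (nth u (u :: ws) i) _) _.
rewrite -[X in _ <= X]addn1 leq_add ?IH ?(ltnW ilt) //.
exact: d_edge (hsub _ (mem_nth set0 ilt)) yin zin.
Qed.

End LoosePaths.

(* The loose-path distance between positions p and q when every v_i carries a
   pendant w_i. *)
Definition posdist (p q : nat) : nat :=
  if p == q then 0 else ((p - q) + (q - p) + odd p + odd q)./2.

Lemma posdistxx p : posdist p p = 0.
Proof. by rewrite /posdist eqxx. Qed.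

Lemma posdistC p q : posdist p q = posdist q p.
Proof. by rewrite /posdist eq_sym; case: eqP => // _; congr (_./2); lia. Qed.

Lemma posdist_triangle p q r : posdist p r <= posdist p q + posdist q r.
Proof. by rewrite /posdist; repeat case: eqP => ?; lia. Qed.

Lemma posdist_edge i q :
  posdist i.*2 q + (q < i.*2.+1) = posdist i.*2.+2 q + (i.*2.+1 < q).
Proof. by rewrite /posdist; repeat case: eqP => ?; lia. Qed.

Lemma posdist_pendant_right i q :
  posdist i.*2.+1 q + (q == i.*2.+1) = posdist i.*2.+2 q + (i.*2.+1 < q).
Proof. by rewrite /posdist; repeat case: eqP => ?; lia. Qed.

Lemma posdist_pendant_left i q :
  posdist i.*2.+1 q + (q == i.*2.+1) = posdist i.*2 q + (q < i.*2.+1).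
Proof. by rewrite /posdist; repeat case: eqP => ?; lia. Qed.

(* v_i sits at position 2i and w_i at 2i+1, so that edge i covers exactly the
   positions 2i, 2i+1 and 2i+2. *)
Definition tpos (n a b : nat) (y : 'I_n) : nat :=
  let l := tl n a b in
  if y < l then y.+1.*2
  else if y < l + a then (y - l).+1.*2.+1
  else (l - b + (y - l - a)).*2.+1.
Arguments tpos {n} a b y.

Section Caterpillar.
Variables n a b : nat.
Local Notation l := (tl n a b).
Local Notation tpos := (@tpos n a b).

Lemma tpos_v (y : 'I_n) : y < l -> tpos y = y.+1.*2.
Proof. by rewrite /tpos => ->. Qed.

Lemma Tnab_memP f : f \in Tnab n a b -> exists2 m, 0 < m < l & f = Tedge n a b m.
Proof. by case/mapP=> m; rewrite mem_iota => hm ->; exists m => //; lia. Qed.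

Lemma Tedge_Tnab m : 0 < m < l -> Tedge n a b m \in Tnab n a b.
Proof. by move=> hm; apply/mapP; exists m; rewrite // mem_iota; lia. Qed.

Hypothesis ab_lt_l : a + b < l.

Lemma tpos_bounds (y : 'I_n) : 2 <= tpos y <= l.*2.
Proof.
have := ltn_ord y; have := ab_lt_l; rewrite /tpos /tl => ? ?.
by repeat case: ifP => ?; lia.
Qed.

Lemma tpos_inj : injective tpos.
Proof.
move=> [y hy] [z hz]; have := ab_lt_l; rewrite /tpos /tl /= => ? eq_pos.
by apply: val_inj => /=; move: eq_pos; repeat case: ifP => ?; lia.
Qed.

Lemma mem_Tedge (y : 'I_n) i : 0 < i < l ->
  (y \in Tedge n a b i) = (i.*2 <= tpos y <= i.*2.+2).
Proof.
case: y => y hy /=; have := ab_lt_l.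
rewrite inE /inI /vlab /wlab /tpos /tl /= => ? ?.
by apply/idP/idP; repeat case: ifP => ?; lia.
Qed.

Lemma tpos_even i : 0 < i <= l -> exists y : 'I_n, tpos y = i.*2.
Proof.
move=> hi; have hy : i.-1 < n by move: ab_lt_l (hi); rewrite /tl; lia.
exists (Ordinal hy); rewrite tpos_v /=; last lia.
by rewrite prednK //; case/andP: hi.
Qed.

Lemma tpos_odd i : inI n a b i -> exists y : 'I_n, tpos y = i.*2.+1.
Proof.
have := ab_lt_l; rewrite /inI /tl => ? /orP[] hi.
  have hy : n - a - b + i.-1 < n by lia.
  by exists (Ordinal hy); rewrite /tpos /tl /=; repeat case: ifP => ?; lia.
have hy : n - a - b + a + (i - (n - a - b - b)) < n by lia.
by exists (Ordinal hy); rewrite /tpos /tl /=; repeat case: ifP => ?; lia.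
Qed.

Lemma tpos_odd_gap i (y : 'I_n) : a < i < l - b -> tpos y != i.*2.+1.
Proof.
case: y => y hy; have := ab_lt_l; rewrite /tpos /tl /= => ? ?.
by apply/eqP; repeat case: ifP => ?; lia.
Qed.

Lemma Tedge_inj i j : 0 < i < l -> 0 < j < l -> Tedge n a b i = Tedge n a b j -> i = j.
Proof.
move=> hi hj eq_ij.
have [y hy] := @tpos_even i ltac:(lia); have [z hz] := @tpos_even i.+1 ltac:(lia).
have := mem_Tedge y hi; have := mem_Tedge z hi.
by rewrite eq_ij !mem_Tedge // hy hz; lia.
Qed.

Lemma Tedge_disjoint i j : 0 < i -> i.+1 < j < l ->
  Tedge n a b i :&: Tedge n a b j = set0.
Proof.
by move=> hi hj; apply/setP => y; rewrite in_setI in_set0 !mem_Tedge; lia.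
Qed.

Lemma posdist_Tedge m (y z : 'I_n) : 0 < m < l ->
  y \in Tedge n a b m -> z \in Tedge n a b m -> posdist (tpos y) (tpos z) <= 1.
Proof. by move=> hm; rewrite !mem_Tedge // /posdist; case: eqP => _; lia. Qed.

Lemma has_lpath_Tedges (E : seq {set 'I_n}) (u w : 'I_n) : tpos u < tpos w ->
  (forall m, (tpos u)./2 <= m <= (tpos w).-1./2 -> Tedge n a b m \in E) ->
  has_lpath E u w (posdist (tpos u) (tpos w)).
Proof.
move=> lt_uw hE; have := tpos_bounds u; have := tpos_bounds w.
set m0 := (tpos u)./2; set s := (tpos w).-1./2 - m0 => rw ru.
pose f i := if i == 0 then u else if i <= s then insubd u (m0 + i).-1 else w.
have tpos_f i :
    tpos (f i) = if i == 0 then tpos u else if i <= s then (m0 + i).*2 else tpos w.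
  rewrite /f; case: eqP => // i0; case: ifP => // si.
  have hk : (m0 + i).-1 < l by lia.
  have hn : l <= n by rewrite /tl; lia.
  by rewrite tpos_v val_insubd (leq_trans hk hn) ?prednK //; lia.
have -> : posdist (tpos u) (tpos w) = s.+1 by rewrite /posdist ifN_eq; lia.
have fw : f s.+1 = w by rewrite /f /= ltnn.
rewrite -fw -[u]/(f 0).
apply: (has_lpath_seq (h := fun i => Tedge n a b (m0 + i))).
- move=> i j; rewrite !unfold_in /= => ? ? /(congr1 tpos).
  by rewrite !tpos_f; repeat case: ifP => ?; lia.
- by move=> i j; rewrite !unfold_in /= => ? ? /Tedge_inj; lia.
- move=> i hi; rewrite hE ?mem_Tedge ?tpos_f; try lia.
  by split=> //; repeat case: ifP => ?; lia.
- by move=> i j ?; rewrite Tedge_disjoint //; lia.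
Qed.

Lemma hdist_Tnab (u w : 'I_n) : hdist (Tnab n a b) u w = posdist (tpos u) (tpos w).
Proof.
apply: hdist_eq; last first.
  move=> p [ws [es [hp <-]]].
  apply: (lpath_size_ge (d := fun y z => posdist (tpos y) (tpos z))) hp.
  - by move=> ?; rewrite posdistxx.
  - by move=> *; apply: posdist_triangle.
  - by move=> f y z /Tnab_memP[m hm ->]; apply: posdist_Tedge.
have [bu bw] := (tpos_bounds u, tpos_bounds w).
case: (ltngtP (tpos u) (tpos w)) => [lt|gt|eq].
- by apply: has_lpath_Tedges lt _ => m hm; apply: Tedge_Tnab; lia.
- rewrite posdistC; apply/has_lpath_sym/has_lpath_Tedges => // m hm.
  by apply: Tedge_Tnab; lia.
- by rewrite (tpos_inj eq) posdistxx; exists [::], [::].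
Qed.

Lemma component_del_Tedge_le k (v w : 'I_n) :
  w \in component (del_edge (Tnab n a b) (Tedge n a b k)) v ->
  tpos v <= k.*2 -> tpos w <= k.*2.
Proof.
rewrite inE => /asboolP[p [ws [es [hp _]]]].
apply: (lpath_closed (P := fun y => tpos y <= k.*2)) hp.
move=> f y z; rewrite mem_filter => /andP[f_ne /Tnab_memP[m hm f_eq]].
move: f_ne; rewrite f_eq !mem_Tedge // => m_ne ? ?.
have : m != k by apply: contraNneq m_ne => ->.
lia.
Qed.

Lemma component_del_Tedge_ge k (v w : 'I_n) : 0 < k ->
  tpos v = k.*2.+2 -> k.*2.+1 < tpos w ->
  w \in component (del_edge (Tnab n a b) (Tedge n a b k)) v.
Proof.
move=> k_gt0 pos_v w_right; rewrite inE; apply/asboolP.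
case: (ltngtP (tpos v) (tpos w)) => [lt|gt|eq]; last 2 first.
- lia.
- by exists 0, [::], [::]; rewrite (tpos_inj eq).
exists (posdist (tpos v) (tpos w)); apply: has_lpath_Tedges lt _ => m.
have := tpos_bounds w; have := tpos_bounds v; rewrite pos_v => ? ? hm.
rewrite mem_filter Tedge_Tnab ?andbT; last lia.
by apply/negP => /eqP /Tedge_inj; lia.
Qed.

End Caterpillar.

Local Open Scope ring_scope.

Definition mass_lt (R : nmodType) (g : nat -> R) (c : nat) : R := \sum_(m < c) g m.

Lemma mass_ltS (R : nmodType) (g : nat -> R) c : mass_lt g c.+1 = mass_lt g c + g c.
Proof. by rewrite /mass_lt big_ord_recr. Qed.

Section Reflection.
Variables (R : realFieldType) (g : nat -> R) (rho : R) (N l k : nat).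
Local Notation mass := (mass_lt g).
Local Notation total := (mass_lt g N).

(* g m is the weight at position m; path_eq and pendant_eq are the
   eigen-equations subtracted along the edge i, between v_i and v_(i+1), resp.
   between w_i and v_(i+1) or v_i; the first alternative of pendant_eq is the
   absence of w_i. *)
Hypothesis rho_gt0 : 0 < rho.
Hypothesis g_ge0 : forall m, 0 <= g m.
Hypothesis path_eq : forall i, (0 < i < l)%N ->
  rho * (g i.*2 - g i.*2.+2) = (total - mass i.*2.+2) - mass i.*2.+1.
Hypothesis pendant_eq : forall i, (0 < i < l)%N -> g i.*2.+1 = 0 \/
  rho * (g i.*2.+1 - g i.*2.+2) = (total - mass i.*2.+2) - g i.*2.+1 /\
  rho * (g i.*2.+1 - g i.*2) = mass i.*2.+1 - g i.*2.+1.

Lemma le_mass_lt c c' : (c <= c')%N -> mass c <= mass c'.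
Proof.
elim: c' => [|c' IH]; first by rewrite leqn0 => /eqP ->.
rewrite leq_eqVlt ltnS => /orP[/eqP -> //| /IH le_cc'].
by rewrite mass_ltS (le_trans le_cc') ?lerDl.
Qed.

Let gap i j := mass i.*2.+1 - (total - mass j.*2).

Let reflection_step i j : (0 < i < j)%N -> (j < l)%N ->
  0 < g j.*2.+1 -> g i.*2.+2 <= g j.*2 -> 0 <= gap i.+1 j ->
  [/\ g i.*2 <= g j.*2.+2, g i.*2.+1 <= g j.*2.+1
    & gap i.+1 j + g j.*2.+1 - g i.*2.+1 <= gap i j.+1].
Proof.
move=> /andP[i_gt0 lt_ij] j_lt_l rw_gt0 le_pq.
have [iP jP] : (0 < i < l)%N /\ (0 < j < l)%N by lia.
rewrite /gap !doubleS.
have eL := path_eq iP; have eR := path_eq jP.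
have eLw : g i.*2.+1 = 0 \/
    rho * (g i.*2.+1 - g i.*2.+2) = (total - mass i.*2.+2) - g i.*2.+1.
  by case: (pendant_eq iP) => [|[]]; [left | right].
have eRw : rho * (g j.*2.+1 - g j.*2) = mass j.*2.+1 - g j.*2.+1.
  by case: (pendant_eq jP) => [rw0|[]] //; move: rw_gt0; rewrite rw0 ltxx.
set A := mass i.*2.+1 in eL eLw *; set B := mass j.*2 in eR eRw *.
set lw := g i.*2.+1 in eL eLw *; set rw := g j.*2.+1 in eR eRw rw_gt0 *.
set p := g i.*2.+2 in eL eLw le_pq *; set q := g j.*2 in eR eRw le_pq *.
have -> : mass i.*2.+3 = A + lw + p by rewrite 2!mass_ltS.
have eA2 : mass i.*2.+2 = A + lw by rewrite mass_ltS.
have eB1 : mass j.*2.+1 = B + q by rewrite mass_ltS.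
have eB2 : mass j.*2.+2 = B + q + rw by rewrite 2!mass_ltS.
rewrite eA2 in eL eLw; rewrite eB1 eB2 in eR eRw; rewrite eB2.
move=> gap_ge0.
have le_lr : lw <= rw.
  case: eLw => [->|eLw]; first exact: ltW.
  have e : (rho + 1) * ((rw - lw) - (q - p))
         = rho * (rw - q) - rho * (lw - p) + ((rw - lw) - (q - p)) by ring.
  have : 0 <= (rho + 1) * ((rw - lw) - (q - p)) by rewrite e eRw eLw; lra.
  by rewrite pmulr_rge0 ?addr_gt0 // => ?; lra.
split=> //; last by lra.
have e : rho * ((g j.*2.+2 - g i.*2) - (q - p))
       = - (rho * (g i.*2 - p)) - rho * (q - g j.*2.+2) by ring.
have : 0 <= rho * ((g j.*2.+2 - g i.*2) - (q - p)) by rewrite e eL eR; lra.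
by rewrite pmulr_rge0 // => ?; lra.
Qed.

Hypothesis mass2 : mass 2 = 0.
Hypothesis pendant_gt0 : forall i, (k <= i < l)%N -> 0 < g i.*2.+1.
Hypothesis pendant_pred : g k.*2.-1 = 0.
Hypothesis k_gt1 : (1 < k)%N.
Hypothesis k_le_half : (k.*2 <= l)%N.
Hypothesis l_lt_N : (l.*2 < N)%N.

Theorem mass_left_lt_right : mass k.*2.+1 < total - mass k.*2.+2.
Proof.
rewrite ltNge; apply/negP => gap0.
have kP : (0 < k < l)%N by lia.
have v0 : g k.*2 <= g k.*2.+2.
  have : rho * (g k.*2 - g k.*2.+2) <= 0 by rewrite path_eq //; lra.
  by rewrite pmulr_rle0 // subr_le0.
have base : g (k.-1).*2 <= g (k.+2).*2 /\ 0 < gap k.-1 k.+2.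
  have kS : k.-1.+1 = k by lia.
  have lw0 : g k.-1.*2.+1 = 0 by rewrite -pendant_pred; congr g; lia.
  have rw_gt0 : 0 < g k.+1.*2.+1 by apply: pendant_gt0; lia.
  have gap_ge0 : 0 <= gap k k.+1 by rewrite /gap doubleS subr_ge0.
  have := @reflection_step k.-1 k.+1 ltac:(lia) ltac:(lia) rw_gt0.
  rewrite -doubleS kS => /(_ v0 gap_ge0) [le_g _ le_gap].
  split; first by rewrite doubleS.
  by apply: lt_le_trans le_gap; rewrite lw0 subr0 ltr_wpDl.
have step d : (d <= k.-2)%N ->
    g (k.-1 - d).*2 <= g (k.+2 + d).*2 /\ 0 < gap (k.-1 - d) (k.+2 + d).
  elim: d => [|d IH] hd; first by rewrite subn0 addn0.
  have [le_g gap_gt0] := IH (ltnW hd).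
  have ei : (k.-1 - d = (k.-1 - d.+1).+1)%N by lia.
  rewrite ei in le_g gap_gt0; rewrite addnS.
  have rw_gt0 : 0 < g (k.+2 + d).*2.+1 by apply: pendant_gt0; lia.
  have [] := @reflection_step (k.-1 - d.+1) (k.+2 + d) ltac:(lia) ltac:(lia)
    rw_gt0 le_g (ltW gap_gt0).
  move=> -> le_lr le_gap; split=> //; apply: lt_le_trans le_gap; lra.
have [] := step k.-2 (leqnn _).
have -> : (k.-1 - k.-2 = 1)%N by lia.
have -> : (k.+2 + k.-2 = k.*2)%N by lia.
rewrite /gap (_ : mass 3 = g 2); last by rewrite mass_ltS mass2 add0r.
have : mass k.*2.*2 + g k.*2.*2 <= total by rewrite -mass_ltS le_mass_lt //; lia.
have := g_ge0 2.
lra.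
Qed.

End Reflection.

Lemma eigen_row_diff (R : pzRingType) n (D : 'M[R]_n) (x : 'cV[R]_n) rho
    (u1 u2 : 'I_n) (A B : pred 'I_n) :
  D *m x = rho *: x ->
  (forall w, D u1 w + (A w)%:R = D u2 w + (B w)%:R) ->
  rho * (x u1 ord0 - x u2 ord0) = \sum_(w | B w) x w ord0 - \sum_(w | A w) x w ord0.
Proof.
move=> eig hrow.
have row u : rho * x u ord0 = \sum_w D u w * x w ord0.
  by have := congr1 (fun M : 'cV[R]_n => M u ord0) eig; rewrite !mxE => <-.
rewrite mulrBr !row -sumrB (big_mkcond B) (big_mkcond A) -sumrB; apply: eq_bigr => w _.
rewrite -mulrBl (_ : D u1 w = D u2 w + (B w)%:R - (A w)%:R); last first.
  by rewrite -hrow addrK.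
rewrite addrAC [D u2 w + _]addrC addrK.
by case: (A w) (B w) => [] [] /=; rewrite ?(subrr, mul1r, mul0r, subr0, sub0r, mulNr).
Qed.

Lemma sum_lt_fibers (I : finType) (V : nmodType) (f : I -> nat) (F : I -> V) c :
  \sum_(i | (f i < c)%N) F i = mass_lt (fun m => \sum_(i | f i == m) F i) c.
Proof.
elim: c => [|c IH]; first by rewrite /mass_lt big_ord0 big_pred0.
rewrite mass_ltS -IH (bigID (fun i => (f i < c)%N)) /=.
by congr (_ + _); apply: eq_bigl => i; rewrite ltnS; case: ltngtP.
Qed.

Lemma sumr_le_sub (I : finType) (R : numDomainType) (F : I -> R) (A B : pred I) :
  (forall i, 0 <= F i) -> (forall i, A i -> B i) ->
  \sum_(i | A i) F i <= \sum_(i | B i) F i.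
Proof.
move=> F_ge0 AB; rewrite [X in _ <= X](bigID A) /=.
rewrite (eq_bigl A) ?lerDl ?sumr_ge0 // => i.
by apply/andb_idl/AB.
Qed.

Section TnabEigenvector.
Variables (R : realType) (n a b : nat) (rho : R) (x : 'cV[R]_n).
Local Notation l := (tl n a b).
Local Notation tpos := (@tpos n a b).
Hypothesis l_large : (a + b + 2 <= l)%N.
Hypothesis x_eigen : distmx R (Tnab n a b) *m x = rho *: x.
Hypothesis x_gt0 : forall i, 0 < x i ord0.

Let ab_lt_l : (a + b < l)%N. Proof. by move: l_large; lia. Qed.
Let g m := \sum_(w | tpos w == m) x w ord0.
Let N := l.*2.+1.

Let g_ge0 m : 0 <= g m.
Proof. by apply: sumr_ge0 => w _; apply: ltW. Qed.

Let g_tpos y : g (tpos y) = x y ord0.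
Proof.
rewrite /g (eq_bigl (pred1 y)) ?big_pred1_eq // => w /=.
by apply/eqP/eqP => [/(tpos_inj ab_lt_l)|->].
Qed.

Let g_at c (y : 'I_n) : tpos y = c -> g c = x y ord0.
Proof. by move=> <-; apply: g_tpos. Qed.

Let g_gap m : (forall y, tpos y != m) -> g m = 0.
Proof. by move=> hm; rewrite /g big_pred0 // => w; apply/negbTE. Qed.

Let sum_tpos_lt c : \sum_(w | (tpos w < c)%N) x w ord0 = mass_lt g c.
Proof. exact: sum_lt_fibers. Qed.

Let sum_tpos_gt c :
  \sum_(w | (c < tpos w)%N) x w ord0 = mass_lt g N - mass_lt g c.+1.
Proof.
have -> : mass_lt g N = \sum_w x w ord0.
  rewrite -sum_tpos_lt; apply: eq_bigl => w.
  by have := tpos_bounds ab_lt_l w; rewrite /N; lia.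
rewrite [in RHS](bigID (fun w => (tpos w < c.+1)%N)) /= sum_tpos_lt addrAC subrr add0r.
by apply: eq_bigl => w; rewrite ltnNge.
Qed.

Let entry u w : distmx R (Tnab n a b) u w = (posdist (tpos u) (tpos w))%:R.
Proof. by rewrite mxE hdist_Tnab. Qed.

Let rho_gt0 : 0 < rho.
Proof.
have [u hu] := tpos_even ab_lt_l (i := 1) ltac:(lia).
have [w hw] := tpos_even ab_lt_l (i := 2) ltac:(lia).
have := congr1 (fun M : 'cV[R]_n => M u ord0) x_eigen.
rewrite !mxE (bigD1 w) //= entry hu hw /posdist /= mul1r => eq_row.
have : 0 < rho * x u ord0.
  rewrite -eq_row ltr_wpDr ?x_gt0 ?sumr_ge0 // => v _.
  by rewrite entry mulr_ge0 ?ler0n ?ltW.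
by rewrite pmulr_lgt0.
Qed.

Let path_eq i : (0 < i < l)%N ->
  rho * (g i.*2 - g i.*2.+2) = (mass_lt g N - mass_lt g i.*2.+2) - mass_lt g i.*2.+1.
Proof.
move=> hi; have [u hu] := tpos_even ab_lt_l (i := i) ltac:(lia).
have [w hw] := tpos_even ab_lt_l (i := i.+1) ltac:(lia).
rewrite doubleS in hw; rewrite (g_at hu) (g_at hw) -sum_tpos_gt -sum_tpos_lt.
apply: (eigen_row_diff (A := fun v => (tpos v < i.*2.+1)%N)
                       (B := fun v => (i.*2.+1 < tpos v)%N) x_eigen) => v.
by rewrite !entry hu hw -!natrD posdist_edge.
Qed.

Let pendant_eq i : (0 < i < l)%N -> g i.*2.+1 = 0 \/
  rho * (g i.*2.+1 - g i.*2.+2) = (mass_lt g N - mass_lt g i.*2.+2) - g i.*2.+1 /\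
  rho * (g i.*2.+1 - g i.*2) = mass_lt g i.*2.+1 - g i.*2.+1.
Proof.
move=> hi; case: (boolP (inI n a b i)) => hI; last first.
  left; apply: g_gap => y; apply: tpos_odd_gap => //.
  by move: hI hi; rewrite /inI; lia.
have [y hy] := tpos_odd ab_lt_l hI.
have [u hu] := tpos_even ab_lt_l (i := i) ltac:(lia).
have [w hw] := tpos_even ab_lt_l (i := i.+1) ltac:(lia).
rewrite doubleS in hw; right; split.
- rewrite [in LHS](g_at hy) (g_at hw) -sum_tpos_gt.
  apply: (eigen_row_diff (A := fun v => tpos v == i.*2.+1)
                         (B := fun v => (i.*2.+1 < tpos v)%N) x_eigen) => v.
  by rewrite !entry hy hw -!natrD posdist_pendant_right.
- rewrite [in LHS](g_at hy) (g_at hu) -sum_tpos_lt.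
  apply: (eigen_row_diff (A := fun v => tpos v == i.*2.+1)
                         (B := fun v => (tpos v < i.*2.+1)%N) x_eigen) => v.
  by rewrite !entry hy hu -!natrD posdist_pendant_left.
Qed.

Theorem Tnab_mass_left_lt_right : (l <= b.*2)%N ->
  \sum_(w | (tpos w <= (l - b).*2)%N) x w ord0 <
  \sum_(w | ((l - b).*2.+1 < tpos w)%N) x w ord0.
Proof.
move=> hlb; have := l_large => hl.
rewrite sum_tpos_gt (eq_bigl (fun w => (tpos w < (l - b).*2.+1)%N)) // sum_tpos_lt.
apply: (@mass_left_lt_right R g rho N l (l - b)) => //; try by rewrite /N; lia.
- rewrite -sum_tpos_lt big_pred0 // => w.
  by have := tpos_bounds ab_lt_l w; lia.
- move=> i hi; have [|y hy] := tpos_odd ab_lt_l (i := i); first by rewrite /inI; lia.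
  by rewrite (g_at hy) x_gt0.
- apply: g_gap => y; rewrite (_ : (l - b).*2.-1 = (l - b).-1.*2.+1); last lia.
  by apply: tpos_odd_gap; lia.
Qed.

End TnabEigenvector.

Unset Implicit Arguments.

Theorem lemma3p1 (R : realType) (n a b : nat) (rho : R) (x : 'cV[R]_n)
    (e : {set 'I_n}) (vp vq : 'I_n) :
  (a + 2 <= b)%N ->
  (2 * (a + b) < n - 1)%N ->
  (* rho = rho(T): the largest eigenvalue of D(T) *)
  eigenvalue (distmx R (Tnab n a b)) rho ->
  (forall mu : R, eigenvalue (distmx R (Tnab n a b)) mu -> mu <= rho) ->
  (* x = x(T): the unit positive eigenvector for rho(T) *)
  distmx R (Tnab n a b) *m x = rho *: x ->
  (forall i, 0 < x i ord0) ->
  \sum_i x i ord0 ^+ 2 = 1 ->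
  (* vp = v_{l-b}, vq = v_{l-b+1}, e the edge containing both *)
  val vp = vlab (tl n a b - b) ->
  val vq = vlab (tl n a b - b).+1 ->
  e \in Tnab n a b -> vp \in e -> vq \in e ->
  (tl n a b <= 2 * b)%N ->
  sigma x (component (del_edge (Tnab n a b) e) vp)
    < sigma x (component (del_edge (Tnab n a b) e) vq).
Proof.
move=> hab hn _ _ x_eigen x_gt0 _ hvp hvq e_in vp_e vq_e hlb.
have l_large : (a + b + 2 <= tl n a b)%N by rewrite /tl; lia.
have ab_lt_l : (a + b < tl n a b)%N by lia.
set k := (tl n a b - b)%N in hvp hvq.
have pos_vp : tpos a b vp = k.*2 by rewrite tpos_v hvp /vlab; lia.
have pos_vq : tpos a b vq = k.*2.+2 by rewrite tpos_v hvq /vlab; lia.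
have [m hm e_eq] := Tnab_memP e_in.
have {m hm e_eq} -> : e = Tedge n a b k.
  by move: vp_e vq_e; rewrite e_eq !mem_Tedge // pos_vp pos_vq => ? ?; congr Tedge; lia.
have x_ge0 i : 0 <= x i ord0 by apply: ltW.
apply: le_lt_trans (lt_le_trans (Tnab_mass_left_lt_right l_large x_eigen x_gt0 _) _).
- apply: sumr_le_sub => // w /(component_del_Tedge_le ab_lt_l); apply.
  by rewrite pos_vp.
- by rewrite /k; lia.
- apply: sumr_le_sub => // w; apply: component_del_Tedge_ge pos_vq => //.
  by rewrite /k; lia.
Qed.
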